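(* Let $w\in\mathcal L_n$. If $q'$ and $q$ are valid steps for $w$ in $\mathcal L$ with $q'<q$, then $\gcd(q,q')$ is also a valid step for $w$ in $\mathcal L$. In particular the minimal valid step of $w$ divides every valid step of $w$.
   Context: $\mathcal L$ is a language over a finite alphabet $\mathcal A$ (nonempty finite words, containing $\mathcal A$, closed under subwords, every word extendable on both sides), $\mathcal L_n$ its words of length $n$. For $n\ge2$, $w\in\mathcal A^n$ and an integer $1\le q\le n/2$ with $w_{[q+1,n]}=w_{[1,n-q]}$, $w^{q\ast r}$ is the word of length $n+(r-1)q$ with $(w^{q\ast r})_{[q(i-1)+1,q(i-1)+n]}=w$ for $1\le i\le r$; $q$ is a valid step for $w$ in $\mathcal L$ if moreover $w^{q\ast2}\in\mathcal L$. The minimal step of $w$ is the least valid step. *)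

From mathcomp Require Import all_boot.
Set Implicit Arguments. Unset Strict Implicit. Unset Printing Implicit Defensive.

Definition is_language (A : finType) (L : seq A -> Prop) : Prop :=
  [/\ (forall w, L w -> w <> [::]),
      (forall a : A, L [:: a]),
      (forall u x v : seq A, L (u ++ x ++ v) -> x <> [::] -> L x)
    & (forall w, L w -> exists a b : A, L (a :: rcons w b))].

(* w^{q*r}: the word of length n + (r-1) q whose windows of length n
   starting at positions q(i-1)+1 (1 <= i <= r) all equal w
   (well defined when w has period q). *)
Fixpoint qpow (A : Type) (w : seq A) (q r : nat) : seq A :=
  match r with
  | 0 | 1 => w
  | r'.+1 => take q w ++ qpow w q r'
  end.

Definition valid_step (A : finType) (L : seq A -> Prop) (w : seq A) (q : nat) : Prop :=
  [/\ 2 <= size w, 1 <= q, q.*2 <= size w,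
      drop q w = take (size w - q) w
    & L (qpow w q 2)].

Definition minimal_step (A : finType) (L : seq A -> Prop) (w : seq A) (m : nat) : Prop :=
  valid_step L w m /\ (forall q, valid_step L w q -> m <= q).

From mathcomp Require Import all_boot.
From mathcomp Require Import zify.

(* Two periods p <= q with p + q <= |w| give the period
   q - p, so the subtractive Euclidean algorithm shows that d = gcd(q,q')
   is again a period (a weak Fine-Wilf lemma, enough here since
   q, q' <= |w|/2).  Because d divides q, the last d letters of the
   prefix w_[1,q] coincide with w_[1,d]; hence w^{d*2} = w_[1,d] w is a
   suffix of w^{q*2} = w_[1,q] w, and it lies in L by closure under
   subwords.  Finally, if m is the minimal step
   and q another one, gcd(q,m) is a valid step not exceeding m, hence
   equal to m, so m divides q. *)

Definition periodic {A : Type} (w : seq A) (p : nat) : Prop :=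
  forall x0 i, i + p < size w -> nth x0 w i = nth x0 w (i + p).

Lemma periodicP {A : Type} (w : seq A) p :
  drop p w = take (size w - p) w <-> periodic w p.
Proof.
split=> [E x0 i Hi | P].
  have := congr1 (fun s => nth x0 s i) E.
  by rewrite nth_drop nth_take ?(addnC p i) //; lia.
case: w P => [//|x0 s] P.
apply: (@eq_from_nth _ x0); first by rewrite size_drop size_takel // leq_subr.
move=> i; rewrite size_drop => Hi.
rewrite nth_drop nth_take // addnC; symmetry; apply: P; lia.
Qed.

Lemma periodic_sub {A : Type} {w : seq A} {p q : nat} :
  periodic w p -> periodic w q -> p <= q -> p + q <= size w ->
  periodic w (q - p).
Proof.
move=> Pp Pq le_pq le_w x0 i Hi.
have [in_w | out_w] := ltnP (i + q) (size w).
  have shift : i + (q - p) + p = i + q by lia.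
  by rewrite Pq // -shift (Pp x0 (i + (q - p))) // shift.
have -> : i = i - p + p by lia.
rewrite -(Pp x0 (i - p)); last lia.
have -> : i - p + p + (q - p) = i - p + q by lia.
apply: Pq; lia.
Qed.

Lemma periodic_gcd {A : Type} {w : seq A} {p q : nat} :
  periodic w p -> periodic w q -> p + q <= size w -> periodic w (gcdn p q).
Proof.
have [k] := ubnP (p + q); elim: k p q => // k IH p q lt_k.
wlog le_pq : p q lt_k / p <= q.
  move=> Hwlog; have [|/ltnW le_qp] := leqP p q; first exact: Hwlog.
  by rewrite gcdnC addnC => Pp Pq; apply: Hwlog; rewrite // addnC.
move=> Pp Pq le_w.
have [->|p_gt0] := posnP p; first by rewrite gcd0n.
have -> : gcdn p q = gcdn p (q - p) by rewrite -{1}(subnKC le_pq) gcdnDl.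
by apply: IH; [lia | | apply: periodic_sub | lia].
Qed.

Lemma periodic_mul {A : Type} {w : seq A} {d : nat} (k : nat) :
  periodic w d -> periodic w (k * d).
Proof.
move=> P; elim: k => [|k IH] x0 i; first by rewrite mul0n addn0.
rewrite mulSnr addnA => Hi.
by rewrite (IH x0 i) ?(P x0 (i + k * d)) //; lia.
Qed.

Lemma prefix_ends_with_block {A : Type} {w : seq A} {d q : nat} :
  periodic w d -> 0 < q -> d %| q -> q <= size w ->
  drop (q - d) (take q w) = take d w.
Proof.
move=> Pd q_gt0 dvd_dq le_qw.
have le_dq : d <= q by apply: dvdn_leq.
have Eq : q - d = (q %/ d - 1) * d by rewrite mulnBl mul1n divnK.
have w_gt0 : 0 < size w by apply: leq_trans le_qw.
case: w Pd le_qw w_gt0 => [//|x0 s] Pd le_qw _.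
apply: (@eq_from_nth _ x0).
  by rewrite size_drop !size_takel ?subKn //; apply: leq_trans le_qw.
move=> i; rewrite size_drop size_takel // subKn // => Hi.
rewrite nth_drop !nth_take; try lia.
rewrite addnC Eq; symmetry; apply: (periodic_mul _ Pd); lia.
Qed.

Lemma qpow2E {A : Type} (w : seq A) q : qpow w q 2 = take q w ++ w.
Proof. by []. Qed.

Lemma qpow2_suffix {A : Type} {w : seq A} {d q : nat} :
  periodic w d -> 0 < q -> d %| q -> q <= size w ->
  qpow w q 2 = take (q - d) w ++ qpow w d 2.
Proof.
move=> Pd q_gt0 dvd_dq le_qw.
rewrite !qpow2E catA -(prefix_ends_with_block Pd q_gt0 dvd_dq le_qw).
by rewrite -(take_takel w (leq_subr d q)) cat_take_drop.
Qed.

Lemma valid_step_gcd {A : finType} (L : seq A -> Prop) (w : seq A) q q' :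
  is_language L -> valid_step L w q' -> valid_step L w q ->
  valid_step L w (gcdn q q').
Proof.
case=> _ _ subword_closed _ [_ q'_gt0 le_q'w E' _] [w_ge2 q_gt0 le_qw E Lq].
set d := gcdn q q'.
have d_gt0 : 0 < d by rewrite gcdn_gt0 q_gt0.
have le_dq : d <= q by apply: dvdn_leq; rewrite ?dvdn_gcdl.
have Pd : periodic w d.
  by apply: periodic_gcd; rewrite -?periodicP //; lia.
split=> //; first lia.
  exact/periodicP.
rewrite (qpow2_suffix Pd) ?dvdn_gcdl // in Lq; last lia.
apply: (subword_closed _ _ [::]); first by rewrite cats0; exact: Lq.
by move/(congr1 size); rewrite qpow2E size_cat /=; lia.
Qed.

Lemma minimal_step_dvd {A : finType} (L : seq A -> Prop) (w : seq A) m q :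
  is_language L -> minimal_step L w m -> valid_step L w q -> m %| q.
Proof.
move=> HL [Vm min_m] Vq.
have le_gm : gcdn q m <= m.
  by case: Vm => _ m_gt0 _ _ _; apply: dvdn_leq; rewrite ?dvdn_gcdr.
have le_mg : m <= gcdn q m by apply/min_m/valid_step_gcd.
have ->: m = gcdn q m by apply/eqP; rewrite eqn_leq le_gm le_mg.
exact: dvdn_gcdl.
Qed.

Theorem mainTheorem11 (A : finType) (L : seq A -> Prop) (n : nat) (w : seq A) :
  is_language L -> L w -> size w = n ->
  (forall q q' : nat, valid_step L w q' -> valid_step L w q -> q' < q ->
     valid_step L w (gcdn q q'))
  /\ (forall m : nat, minimal_step L w m ->
        forall q : nat, valid_step L w q -> m %| q).
Proof.
move=> HL _ _; split.
  by move=> q q' Vq' Vq _; exact: valid_step_gcd.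
by move=> m Mm q; exact: minimal_step_dvd.
Qed.
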